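(* In the two-tier residency matching game described in the context (list length $K$, high-match value $v>1$), under the large market approximation, if a symmetric equilibrium exists for high doctors, then it is either an equilibrium in pure strategies, or a mixed strategy equilibrium in which high doctors randomize between two consecutive strategies $(k,K-k)$ and $(k+1,K-k-1)$ for some integer $k$.
   Context: Model: there are high-tier and low-tier doctors and high-tier and low-tier hospitals, each hospital having one position. Every hospital prefers every high doctor to every low doctor, and every doctor prefers every high hospital to every low hospital; within a tier, preferences are independent uniformly random permutations. Each doctor submits a ranked list of exactly $K$ hospitals; hospitals submit full true rankings; doctor-proposing deferred acceptance is run. A doctor's strategy is a pair $(k,K-k)$: he lists his $k$ most preferred high hospitals followed by his $K-k$ most preferred low hospitals. A doctor gets value $v>1$ if matched to a high hospital, $1$ if matched to a low one, $0$ otherwise. Large market approximation: in the limit of many agents (tier proportions, $K$, $v$ fixed), given the strategy profile, each application of a high doctor to a high (resp. low) hospital is accepted independently with a probability $p$ (resp. $p'$) determined by the aggregate profile via fixed-point equations (expected matched doctors = expected hospitals receiving at least one application, a hospital with on average $\lambda$ applications receiving none with probability $e^{-\lambda}$), and unaffected by an individual doctor's choice. Since hospitals rank all high doctors above low ones, the high doctors' assignment does not depend on low doctors. A symmetric equilibrium for high doctors is a (possibly mixed) strategy used by all high doctors such that every strategy in its support maximizes a high doctor's expected value given $p,p'$. *)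

From Stdlib Require Import Reals Lra.
Open Scope R_scope.

(* Strategies of a high doctor are indexed by k in {0,...,K}: strategy (k, K-k).
   A (possibly mixed) symmetric strategy is sigma : nat -> R, sigma k being the
   probability of playing (k, K-k); only k = 0..K are meaningful.
   p  : acceptance probability of an application of a high doctor to a high hospital
   p' : acceptance probability of an application of a high doctor to a low hospital
   Applications are accepted independently; in doctor-proposing DA a doctor is
   matched to the first hospital of his list that accepts him. *)

Fixpoint gsum (x : R) (n : nat) : R :=
  match n with
  | O => 0
  | S m => gsum x m + x ^ m
  end.

Definition prob_high (p : R) (k : nat) : R := 1 - (1 - p) ^ k.

Definition prob_low (K : nat) (p p' : R) (k : nat) : R :=
  (1 - p) ^ k * (1 - (1 - p') ^ (K - k)).

Definition value (K : nat) (v p p' : R) (k : nat) : R :=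
  v * prob_high p k + prob_low K p p' k.

Definition apps_high (p : R) (k : nat) : R := gsum (1 - p) k.
Definition apps_low (K : nat) (p p' : R) (k : nat) : R :=
  (1 - p) ^ k * gsum (1 - p') (K - k).

Definition mixed_strategy (K : nat) (sigma : nat -> R) : Prop :=
  (forall k, (k <= K)%nat -> 0 <= sigma k) /\ sum_f_R0 sigma K = 1.

(* Large-market fixed point equations. dH, hH, hL are the (relative) masses of
   high doctors, high hospitals and low hospitals. Expected matched doctors in
   each tier = expected number of hospitals of that tier receiving at least one
   application, a hospital receiving lambda applications on average receiving
   none with probability exp(-lambda). *)
Definition fixed_point (K : nat) (dH hH hL : R) (sigma : nat -> R) (p p' : R) : Prop :=
  0 <= p <= 1 /\ 0 <= p' <= 1 /\
  dH * sum_f_R0 (fun k => sigma k * prob_high p k) K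
    = hH * (1 - exp (- (dH * sum_f_R0 (fun k => sigma k * apps_high p k) K / hH))) /\
  dH * sum_f_R0 (fun k => sigma k * prob_low K p p' k) K
    = hL * (1 - exp (- (dH * sum_f_R0 (fun k => sigma k * apps_low K p p' k) K / hL))).

Definition symmetric_equilibrium (K : nat) (v dH hH hL : R) (sigma : nat -> R) : Prop :=
  mixed_strategy K sigma /\
  exists p p', fixed_point K dH hH hL sigma p p' /\
    forall k, (k <= K)%nat -> sigma k > 0 ->
      forall j, (j <= K)%nat -> value K v p p' j <= value K v p p' k.

Definition pure_strategy (K : nat) (sigma : nat -> R) : Prop :=
  exists k, (k <= K)%nat /\ sigma k = 1.

Definition mixes_two_consecutive (K : nat) (sigma : nat -> R) : Prop :=
  exists k, (k + 1 <= K)%nat /\ sigma k > 0 /\ sigma (k + 1)%nat > 0 /\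
    sigma k + sigma (k + 1)%nat = 1.

From Stdlib Require Import Reals Lra Lia Classical.
Open Scope R_scope.

(* For 0 < p < 1 the expected value of strategy (k, K-k) is strictly concave in
   k, so a high doctor's best replies form one point or two consecutive points.
   The support of an equilibrium consists of best replies; once it contains two
   points, one of them sends an application to a high hospital, so the number x
   of applications per high hospital is positive. A high match has probability
   p times the number of high applications, so the high-tier fixed point
   equation reads p x = 1 - exp (-x), and 0 < 1 - exp (-x) < x forces
   0 < p < 1. *)

Lemma sum_f_R0_nonneg (f : nat -> R) (K : nat) :
  (forall k, (k <= K)%nat -> 0 <= f k) -> 0 <= sum_f_R0 f K.
Proof.
  induction K as [|K IHK]; intros Hf; simpl.
  - apply Hf; lia.
  - assert (0 <= sum_f_R0 f K) by (apply IHK; intros; apply Hf; lia).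
    assert (0 <= f (S K)) by (apply Hf; lia).
    lra.
Qed.

Lemma sum_f_R0_ge_term (f : nat -> R) (K j : nat) :
  (forall k, (k <= K)%nat -> 0 <= f k) -> (j <= K)%nat -> f j <= sum_f_R0 f K.
Proof.
  induction K as [|K IHK]; intros Hf Hj; simpl.
  - replace j with 0%nat by lia; lra.
  - assert (0 <= f (S K)) by (apply Hf; lia).
    destruct (Nat.eq_dec j (S K)) as [->|Hne].
    + assert (0 <= sum_f_R0 f K) by (apply sum_f_R0_nonneg; intros; apply Hf; lia).
      lra.
    + assert (f j <= sum_f_R0 f K) by (apply IHK; [intros; apply Hf|]; lia).
      lra.
Qed.

Lemma sum_f_R0_window (f : nat -> R) (a n K : nat) :
  (a + n <= K)%nat ->
  (forall k, (k <= K)%nat -> (k < a \/ a + n < k)%nat -> f k = 0) ->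
  sum_f_R0 f K = sum_f_R0 (fun i => f (a + i)%nat) n.
Proof.
  revert n; induction K as [|K IHK]; intros n Hn Hout.
  - replace a with 0%nat by lia; replace n with 0%nat by lia; reflexivity.
  - simpl sum_f_R0 at 1.
    destruct (Nat.le_gt_cases (a + n) K) as [HnK|HnK].
    + rewrite (Hout (S K)), (IHK n) by (intros; try apply Hout; lia).
      ring.
    + destruct n as [|n].
      * rewrite sum_eq_R0 by (intros; apply Hout; lia).
        simpl; replace (a + 0)%nat with (S K) by lia; ring.
      * rewrite (IHK n) by (intros; try apply Hout; lia).
        simpl; replace (a + S n)%nat with (S K) by lia; reflexivity.
Qed.

Lemma mixed_strategy_support_nonempty (K : nat) (sigma : nat -> R) :
  mixed_strategy K sigma -> exists a, (a <= K)%nat /\ sigma a > 0.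
Proof.
  intros [Hnn Hsum].
  apply NNPP; intros Hnone.
  rewrite sum_eq_R0 in Hsum; [lra|].
  intros k Hk.
  assert (~ sigma k > 0) by (intros Hk'; apply Hnone; exists k; auto).
  specialize (Hnn k Hk); lra.
Qed.

Lemma pure_or_two_consecutive_of_support (K : nat) (sigma : nat -> R) :
  mixed_strategy K sigma ->
  (forall i j, (i < j <= K)%nat -> sigma i > 0 -> sigma j > 0 -> j = S i) ->
  pure_strategy K sigma \/ mixes_two_consecutive K sigma.
Proof.
  intros Hms Hcons.
  destruct (mixed_strategy_support_nonempty K sigma Hms) as [a [HaK Ha]].
  destruct Hms as [Hnn Hsum].
  assert (Hzero : forall k, (k <= K)%nat -> ~ sigma k > 0 -> sigma k = 0)
    by (intros k Hk; specialize (Hnn k Hk); lra).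
  destruct (classic (exists b, (b <= K)%nat /\ b <> a /\ sigma b > 0))
    as [[b [HbK [Hba Hb]]]|Hsingle].
  - assert (Hpair : exists i, (S i <= K)%nat /\ sigma i > 0 /\ sigma (S i) > 0).
    { assert (a < b \/ b < a)%nat as [Hab|Hab] by lia.
      - exists a; rewrite <- (Hcons a b); auto.
      - exists b; rewrite <- (Hcons b a); auto. }
    destruct Hpair as [i [HiK [Hi Hi']]].
    right; exists i.
    rewrite Nat.add_1_r; repeat split; auto.
    assert (Hout : forall k, (k <= K)%nat -> (k < i \/ i + 1 < k)%nat -> sigma k = 0).
    { intros k Hk Hk_out; apply Hzero; auto; intros Hk_pos.
      destruct Hk_out as [Hki|Hik].
      - assert (i = S k) by (apply Hcons; auto; lia).
        assert (S i = S k) by (apply Hcons; auto; lia).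
        lia.
      - assert (k = S i) by (apply Hcons; auto; lia).
        lia. }
    rewrite (sum_f_R0_window sigma i 1 K ltac:(lia) Hout) in Hsum.
    simpl in Hsum; rewrite Nat.add_0_r, Nat.add_1_r in Hsum; exact Hsum.
  - left; exists a; split; auto.
    assert (Hout : forall k, (k <= K)%nat -> (k < a \/ a + 0 < k)%nat -> sigma k = 0).
    { intros k Hk Hk_out; apply Hzero; auto; intros Hk_pos.
      apply Hsingle; exists k; repeat split; auto; lia. }
    rewrite (sum_f_R0_window sigma a 0 K ltac:(lia) Hout) in Hsum.
    simpl in Hsum; rewrite Nat.add_0_r in Hsum; exact Hsum.
Qed.

Section StrictlyConcaveSequence.

Variables (f : nat -> R) (K : nat).
Hypothesis f_strictly_concave :
  forall k, (k + 2 <= K)%nat -> f k + f (k + 2)%nat < 2 * f (k + 1)%nat.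

Lemma strictly_concave_increments_decrease (i d : nat) :
  (i + d + 2 <= K)%nat ->
  f (i + d + 2)%nat - f (i + d + 1)%nat < f (i + 1)%nat - f i.
Proof.
  induction d as [|d IHd]; intros Hd.
  - rewrite Nat.add_0_r in *; specialize (f_strictly_concave i Hd); lra.
  - specialize (f_strictly_concave (i + d + 1)%nat ltac:(lia)).
    specialize (IHd ltac:(lia)).
    replace (i + S d + 2)%nat with (i + d + 1 + 2)%nat by lia.
    replace (i + S d + 1)%nat with (i + d + 1 + 1)%nat by lia.
    replace (i + d + 1 + 1)%nat with (i + d + 2)%nat in * by lia.
    lra.
Qed.

Lemma strictly_concave_maximizers_consecutive (i j : nat) :
  (i < j <= K)%nat ->
  (forall l, (l <= K)%nat -> f l <= f i) ->
  (forall l, (l <= K)%nat -> f l <= f j) ->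
  j = S i.
Proof.
  intros Hij Hmax_i Hmax_j.
  destruct (Nat.eq_dec j (S i)) as [|Hne]; [assumption|exfalso].
  destruct (Nat.le_exists_sub (i + 2) j ltac:(lia)) as [d [Hj _]].
  pose proof (strictly_concave_increments_decrease i d ltac:(lia)) as Hdecr.
  replace (i + d + 2)%nat with j in Hdecr by lia.
  specialize (Hmax_i (i + 1)%nat ltac:(lia)).
  specialize (Hmax_j (i + d + 1)%nat ltac:(lia)).
  lra.
Qed.

End StrictlyConcaveSequence.

Lemma value_second_difference (k m : nat) (v p p' : R) :
  let K := (k + 2 + m)%nat in
  value K v p p' k + value K v p p' (k + 2) - 2 * value K v p p' (k + 1)
  = - ((v - 1) * (1 - p) ^ k * p ^ 2 + (1 - p) ^ k * (1 - p') ^ m * (p - p') ^ 2).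
Proof.
  unfold value, prob_high, prob_low; simpl.
  replace (k + 2 + m - k)%nat with (m + 2)%nat by lia.
  replace (k + 2 + m - (k + 1))%nat with (m + 1)%nat by lia.
  replace (k + 2 + m - (k + 2))%nat with m by lia.
  rewrite !pow_add; simpl; ring.
Qed.

Lemma value_strictly_concave (K : nat) (v p p' : R) (k : nat) :
  v > 1 -> 0 < p < 1 -> 0 <= p' <= 1 -> (k + 2 <= K)%nat ->
  value K v p p' k + value K v p p' (k + 2) < 2 * value K v p p' (k + 1).
Proof.
  intros Hv Hp Hp' HkK.
  destruct (Nat.le_exists_sub (k + 2) K HkK) as [m [-> _]].
  pose proof (value_second_difference k m v p p') as Hdiff; simpl in Hdiff.
  replace (m + (k + 2))%nat with (k + 2 + m)%nat by lia.
  assert (0 < (1 - p) ^ k) by (apply pow_lt; lra).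
  assert (0 <= (1 - p') ^ m) by (apply pow_le; lra).
  assert (0 < (v - 1) * (1 - p) ^ k * p ^ 2)
    by (apply Rmult_lt_0_compat; [apply Rmult_lt_0_compat|apply pow_lt]; lra).
  assert (0 <= (1 - p) ^ k * (1 - p') ^ m * (p - p') ^ 2)
    by (apply Rmult_le_pos; [apply Rmult_le_pos|apply pow2_ge_0]; lra).
  lra.
Qed.

Lemma gsum_nonneg (x : R) (k : nat) : 0 <= x -> 0 <= gsum x k.
Proof.
  intros Hx; induction k as [|k IHk]; simpl gsum; [lra|].
  pose proof (pow_le x k Hx); lra.
Qed.

Lemma gsum_ge_1 (x : R) (k : nat) : 0 <= x -> (1 <= k)%nat -> 1 <= gsum x k.
Proof.
  intros Hx Hk; destruct k as [|k]; [lia|]; clear Hk.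
  induction k as [|k IHk]; [simpl; lra|].
  change (gsum x (S (S k))) with (gsum x (S k) + x ^ S k).
  pose proof (pow_le x (S k) Hx); lra.
Qed.

Lemma gsum_mul_one_sub (x : R) (k : nat) : gsum x k * (1 - x) = 1 - x ^ k.
Proof.
  induction k as [|k IHk]; simpl; [ring|].
  rewrite Rmult_plus_distr_r, IHk; ring.
Qed.

Lemma prob_high_eq_mul_apps_high (p : R) (k : nat) :
  prob_high p k = p * apps_high p k.
Proof.
  unfold prob_high, apps_high.
  rewrite <- gsum_mul_one_sub; ring.
Qed.

Lemma one_sub_exp_neg_bounds (x : R) : 0 < x -> 0 < 1 - exp (- x) < x.
Proof.
  intros Hx.
  pose proof (exp_ineq1 (- x) ltac:(lra)).
  pose proof (exp_increasing (- x) 0 ltac:(lra)) as Hlt; rewrite exp_0 in Hlt.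
  lra.
Qed.

Lemma high_acceptance_interior (K : nat) (dH hH hL : R) (sigma : nat -> R)
  (p p' : R) (j : nat) :
  dH > 0 -> hH > 0 -> mixed_strategy K sigma ->
  fixed_point K dH hH hL sigma p p' ->
  (1 <= j <= K)%nat -> sigma j > 0 -> 0 < p < 1.
Proof.
  intros HdH HhH [Hnn _] [Hp [_ [Ehigh _]]] Hj Hsj.
  set (A := sum_f_R0 (fun k => sigma k * apps_high p k) K) in Ehigh.
  assert (HA : 0 < A).
  { assert (Hterm : forall k, (k <= K)%nat -> 0 <= sigma k * apps_high p k)
      by (intros; apply Rmult_le_pos; [auto|apply gsum_nonneg; lra]).
    pose proof (sum_f_R0_ge_term _ K j Hterm ltac:(lia)).
    assert (1 <= apps_high p j) by (apply gsum_ge_1; [lra|lia]).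
    unfold A; nra. }
  assert (Hsum : sum_f_R0 (fun k => sigma k * prob_high p k) K = p * A).
  { unfold A; rewrite scal_sum; apply sum_eq; intros.
    rewrite prob_high_eq_mul_apps_high; ring. }
  rewrite Hsum in Ehigh.
  set (x := dH * A / hH) in Ehigh.
  assert (Hx : 0 < x) by (apply Rdiv_lt_0_compat; nra).
  assert (Hpx : p * x = 1 - exp (- x))
    by (apply (Rmult_eq_reg_l hH); [rewrite <- Ehigh; unfold x; field|]; lra).
  pose proof (one_sub_exp_neg_bounds x Hx).
  split; nra.
Qed.

Theorem lemma1 (K : nat) (v dH hH hL : R) (sigma : nat -> R) :
  v > 1 -> dH > 0 -> hH > 0 -> hL > 0 ->
  symmetric_equilibrium K v dH hH hL sigma ->
  pure_strategy K sigma \/ mixes_two_consecutive K sigma.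
Proof.
  intros Hv HdH HhH _ [Hms [p [p' [Hfp Hbest]]]].
  apply (pure_or_two_consecutive_of_support K sigma Hms).
  intros i j Hij Hi Hj.
  assert (Hp : 0 < p < 1)
    by (apply (high_acceptance_interior K dH hH hL sigma p p' j); auto; lia).
  apply (strictly_concave_maximizers_consecutive (value K v p p') K).
  - intros k Hk; apply value_strictly_concave; auto.
    destruct Hfp as [_ [Hp' _]]; exact Hp'.
  - exact Hij.
  - apply Hbest; auto; lia.
  - apply Hbest; tauto.
Qed.
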